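(* Let $\mathbb{F}$ be a field of characteristic not equal to $2$, and let $\ell_1,\ell_2,\ell_3 \in \mathbb{F}$ with $\ell_1 \ne 0$. Let $x_1,x_2 \in \mathbb{F}^2$ with $\|x_1-x_2\| = \ell_1$. Then the number of points $x_3 \in \mathbb{F}^2$ with $\|x_2-x_3\| = \ell_2$ and $\|x_3 - x_1\| = \ell_3$ is exactly $$\mu = \begin{cases} 2 & \text{if } 4\sigma_2-\sigma_1^2 \text{ is a nonzero square in } \mathbb{F},\\ 1 & \text{if } 4\sigma_2-\sigma_1^2 = 0,\\ 0 & \text{if } 4\sigma_2-\sigma_1^2 \text{ is a nonsquare in }\mathbb{F},\end{cases}$$ where $\sigma_1 = \ell_1+\ell_2+\ell_3$ and $\sigma_2 = \ell_1\ell_2+\ell_2\ell_3+\ell_3\ell_1$.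
   Context: For $u=(u_1,u_2), v=(v_1,v_2)\in\mathbb{F}^2$, $\|u-v\| = (u_1-v_1)^2+(u_2-v_2)^2\in\mathbb{F}$. *)

From HB Require Import structures.
From mathcomp Require Import all_boot all_order all_algebra.
Set Implicit Arguments. Unset Strict Implicit. Unset Printing Implicit Defensive.
Import Order.TTheory GRing.Theory Num.Theory.
Local Open Scope ring_scope.

(* ||u - v|| = (u1-v1)^2 + (u2-v2)^2 in F, for u v in F^2 = F * F. *)
Definition sqdist (F : fieldType) (u v : F * F) : F :=
  (u.1 - v.1) ^+ 2 + (u.2 - v.2) ^+ 2.

Definition has_exactly (T : eqType) (P : T -> Prop) (n : nat) : Prop :=
  exists s : seq T, [/\ uniq s, size s = n & forall x, P x <-> x \in s].

Definition is_square (F : fieldType) (a : F) : Prop := exists y : F, y ^+ 2 = a.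

From mathcomp Require Import all_boot all_order all_algebra.
From mathcomp Require Import ring.
Set Implicit Arguments. Unset Strict Implicit.
Import GRing.Theory.
Local Open Scope ring_scope.

(* Write x3 in the orthogonal frame at x2 spanned by v = x1 - x2 and its
   rotation v^perp, as x3 = x2 + a v + c v^perp.  Both squared distances are
   then multiples of l1 = ||v||: ||x2 - x3|| = (a^2 + c^2) l1 and
   ||x3 - x1|| = ((a - 1)^2 + c^2) l1.  Subtracting the two circle equations
   fixes a = (l1 + l2 - l3) / (2 l1), and the remaining one becomes
   (2 l1 c)^2 = 4 s2 - s1^2.  As (a, c) are coordinates, the solutions are
   in bijection with the square roots of D = 4 s2 - s1^2. *)

Lemma has_exactly_inj_image (T U : eqType) (f : T -> U) (Q : T -> Prop)
    (P : U -> Prop) (n : nat) :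
  injective f -> (forall x, P x <-> exists2 y, Q y & x = f y) ->
  has_exactly Q n -> has_exactly P n.
Proof.
move=> inj_f PE [s [uniq_s size_s Qs]]; exists (map f s); split.
- by rewrite map_inj_uniq.
- by rewrite size_map.
move=> x; rewrite PE; split.
- by case=> y /Qs y_s ->; rewrite map_f.
by case/mapP=> y /Qs Qy ->; exists y.
Qed.

Lemma has_exactly_sqrt (F : fieldType) (D : F) :
  (2%:R : F) != 0 ->
  let Q := fun y : F => y ^+ 2 = D in
  [/\ (D != 0 -> is_square D -> has_exactly Q 2),
      (D = 0 -> has_exactly Q 1)
    & (~ is_square D -> has_exactly Q 0)].
Proof.
move=> two_neq0 Q; split.
- move=> D_neq0 [r r2D].
  have r_neq0 : r != 0 by apply: contraNneq D_neq0 => r0; rewrite -r2D r0 expr0n.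
  exists [:: r; - r]; split => //.
    rewrite /= inE andbT -subr_eq0 opprK -mulr2n -mulr_natr.
    exact: mulf_neq0.
  by move=> y; rewrite /Q !inE -r2D -eqf_sqr; split=> /eqP.
- move=> D0; exists [:: 0]; split => // y; rewrite /Q inE D0.
  by split=> [/eqP | /eqP ->]; [rewrite sqrf_eq0 | rewrite expr0n].
- by move=> nsq; exists [::]; split => // y; split => // y2D; case: nsq; exists y.
Qed.

Section Frame.

Variables (F : fieldType) (x1 x2 : F * F).

Definition frame_point (ac : F * F) : F * F :=
  (x2.1 + ac.1 * (x1.1 - x2.1) - ac.2 * (x1.2 - x2.2),
   x2.2 + ac.1 * (x1.2 - x2.2) + ac.2 * (x1.1 - x2.1)).

Definition frame_coords (x : F * F) : F * F :=
  (((x.1 - x2.1) * (x1.1 - x2.1) + (x.2 - x2.2) * (x1.2 - x2.2)) / sqdist x1 x2,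
   ((x.2 - x2.2) * (x1.1 - x2.1) - (x.1 - x2.1) * (x1.2 - x2.2)) / sqdist x1 x2).

Hypothesis x1x2_neq0 : sqdist x1 x2 != 0.

Lemma frame_pointK : cancel frame_point frame_coords.
Proof.
move: x1x2_neq0; case: x1 x2 => [p1 p2] [w1 w2] l_neq0 [a c].
by rewrite /frame_coords /frame_point /sqdist /= in l_neq0 *; congr pair; field.
Qed.

Lemma frame_coordsK : cancel frame_coords frame_point.
Proof.
move: x1x2_neq0; case: x1 x2 => [p1 p2] [w1 w2] l_neq0 [y1 y2].
by rewrite /frame_coords /frame_point /sqdist /= in l_neq0 *; congr pair; field.
Qed.

Lemma sqdist_frame_origin ac :
  sqdist x2 (frame_point ac) = (ac.1 ^+ 2 + ac.2 ^+ 2) * sqdist x1 x2.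
Proof. by rewrite /sqdist /=; ring. Qed.

Lemma sqdist_frame_unit ac :
  sqdist (frame_point ac) x1 = ((ac.1 - 1) ^+ 2 + ac.2 ^+ 2) * sqdist x1 x2.
Proof. by rewrite /sqdist /=; ring. Qed.

End Frame.

Lemma frame_circlesE (F : fieldType) (l1 l2 l3 a c : F) :
  (2%:R : F) != 0 -> l1 != 0 ->
  ((a ^+ 2 + c ^+ 2) * l1 = l2 /\ ((a - 1) ^+ 2 + c ^+ 2) * l1 = l3) <->
  (a = (l1 + l2 - l3) / (2%:R * l1) /\
   (2%:R * l1 * c) ^+ 2
   = 4%:R * (l1 * l2 + l2 * l3 + l3 * l1) - (l1 + l2 + l3) ^+ 2).
Proof.
move=> two_neq0 l1_neq0; have tl_neq0 : 2%:R * l1 != 0 by rewrite mulf_neq0.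
split=> [[<- <-] | [-> c2]]; first by split; field; rewrite ?l1_neq0 ?two_neq0.
have -> : c ^+ 2 = (2%:R * l1 * c) ^+ 2 / (2%:R * l1) ^+ 2.
  by rewrite exprMn mulrC mulKf // expf_neq0.
by rewrite c2; split; field; rewrite ?l1_neq0 ?two_neq0.
Qed.

Theorem lemma4p1 (F : fieldType) (l1 l2 l3 : F) (x1 x2 : F * F) :
  (2%:R : F) != 0 ->
  l1 != 0 ->
  sqdist x1 x2 = l1 ->
  let s1 := l1 + l2 + l3 in
  let s2 := l1 * l2 + l2 * l3 + l3 * l1 in
  let D := 4%:R * s2 - s1 ^+ 2 in
  let P := fun x3 : F * F => sqdist x2 x3 = l2 /\ sqdist x3 x1 = l3 in
  [/\ (D != 0 -> is_square D -> has_exactly P 2),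
      (D = 0 -> has_exactly P 1)
    & (~ is_square D -> has_exactly P 0)].
Proof.
move=> two_neq0 l1_neq0 x1x2 s1 s2 D P.
have x1x2_neq0 : sqdist x1 x2 != 0 by rewrite x1x2.
have q_neq0 : 2%:R * l1 != 0 by rewrite mulf_neq0.
pose X y := frame_point x1 x2 ((l1 + l2 - l3) / (2%:R * l1), y / (2%:R * l1)).
have X_inj : injective X.
  by move=> y y' /(can_inj (frame_pointK x1x2_neq0)) [/(mulIf (invr_neq0 q_neq0))].
have PE x : P x <-> exists2 y, y ^+ 2 = D & x = X y.
  rewrite -(frame_coordsK x1x2_neq0 x); case: (frame_coords x1 x2 x) => a c.
  rewrite /P sqdist_frame_origin sqdist_frame_unit x1x2 frame_circlesE //=.
  split=> [[-> c2] | [y y2D /(can_inj (frame_pointK x1x2_neq0)) [-> ->]]].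
    by exists (2%:R * l1 * c); rewrite // /X [_ * c]mulrC mulfK.
  by rewrite [_ * (y / _)]mulrC divfK.
have [sqrt2 sqrt1 sqrt0] := has_exactly_sqrt D two_neq0.
by split=> [D_neq0 /(sqrt2 D_neq0) | /sqrt1 | /sqrt0]; apply: has_exactly_inj_image PE.
Qed.
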